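(* Let $\mathcal F$ be a lattice filter and $P$ an implication filter of an MV-algebra $\mathcal L$. Then $J_u(\mathcal F,P)$ is the smallest lattice filter $\mathcal H$ such that $\mathcal F\subseteq\mathcal H$ and $P\subseteq\mathcal K(\mathcal H)$.
   Context: $\mathcal L=(L,\oplus,\lnot,0)$ is an MV-algebra. We write $x\to y=\lnot x\oplus y$ and use the usual lattice order. A lattice filter is a nonempty upward-closed subset closed under $\wedge$. An implication filter is a subset $P\subseteq L$ containing $1$ such that $x\in P$ and $x\to y\in P$ imply $y\in P$. For an implication filter $P$, let $\sim_P$ be the congruence given by $x\sim_P y$ iff $x\to y\in P$ and $y\to x\in P$. Let $\eta_P\colon\mathcal L\to\mathcal L/P$ be the canonical epimorphism, and for $X\subseteq L$ let $X/P=\eta_P[X]$. Define $J_u(\mathcal F,P)=\eta_P^{-1}[\mathcal F/P]$. The kernel of an upward-closed set $\mathcal H$ is $\mathcal K(\mathcal H)=\{z: \forall a\notin\mathcal H,\ z\to a\notin\mathcal H\}$. *)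

From Stdlib Require Import Classical.

Set Implicit Arguments.

Record MVAlgebra := {
  mv_car :> Type;
  mv_oplus : mv_car -> mv_car -> mv_car;
  mv_neg : mv_car -> mv_car;
  mv_zero : mv_car;
  mv_oplusA : forall x y z, mv_oplus x (mv_oplus y z) = mv_oplus (mv_oplus x y) z;
  mv_oplusC : forall x y, mv_oplus x y = mv_oplus y x;
  mv_oplus0 : forall x, mv_oplus x mv_zero = x;
  mv_negK : forall x, mv_neg (mv_neg x) = x;
  mv_oplus1 : forall x, mv_oplus x (mv_neg mv_zero) = mv_neg mv_zero;
  mv_luk : forall x y,
    mv_oplus (mv_neg (mv_oplus (mv_neg x) y)) y
    = mv_oplus (mv_neg (mv_oplus (mv_neg y) x)) x
}.

Section MV.
Context {L : MVAlgebra}.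

Definition mv_one : L := mv_neg L (mv_zero L).
Definition mv_imp (x y : L) : L := mv_oplus L (mv_neg L x) y.
Definition mv_le (x y : L) : Prop := mv_imp x y = mv_one.
Definition mv_join (x y : L) : L := mv_oplus L (mv_neg L (mv_oplus L (mv_neg L x) y)) y.
Definition mv_meet (x y : L) : L := mv_neg L (mv_join (mv_neg L x) (mv_neg L y)).

Definition subset (X Y : L -> Prop) : Prop := forall x, X x -> Y x.

Definition upward_closed (H : L -> Prop) : Prop :=
  forall x y, H x -> mv_le x y -> H y.

Definition lattice_filter (F : L -> Prop) : Prop :=
  (exists x, F x) /\ upward_closed F /\ (forall x y, F x -> F y -> F (mv_meet x y)).

Definition implication_filter (P : L -> Prop) : Prop :=
  P mv_one /\ (forall x y, P x -> P (mv_imp x y) -> P y).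

Definition simP (P : L -> Prop) (x y : L) : Prop := P (mv_imp x y) /\ P (mv_imp y x).

(* the canonical epimorphism eta_P : L -> L/P, sending x to its ~_P-class *)
Definition etaP (P : L -> Prop) (x : L) : L -> Prop := fun y => simP P x y.

(* J_u(F,P) = eta_P^{-1}[ eta_P[F] ] *)
Definition J_u (F P : L -> Prop) : L -> Prop :=
  fun x => exists f, F f /\ etaP P x = etaP P f.

Definition kernel (H : L -> Prop) : L -> Prop :=
  fun z => forall a, ~ H a -> ~ H (mv_imp z a).

End MV.

From Stdlib Require Import Classical FunctionalExtensionality PropExtensionality.

(* For an implication filter P the relation ~_P is a congruence
   for the lattice operations, and eta_P x = eta_P f holds exactly when
   x ~_P f; hence J_u(F,P) is the set of elements ~_P-equivalent to some
   element of F, i.e. the ~_P-saturation of F.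
   - J_u(F,P) is a lattice filter: meets pass through ~_P, and if x ~_P f
     and x <= y then y = x \/ y ~_P f \/ y, which lies in F above f.
   - F is contained in J_u(F,P) by reflexivity of ~_P.
   - P lies in the kernel: for z in P one has z -> a ~_P a, so a saturated
     set containing z -> a contains a.
   - Minimality: if P is in the kernel of an upward-closed H containing F,
     and x ~_P f with f in F, then f -> x is in the kernel; since
     (f -> x) -> x = f \/ x lies above f, it is in H, so x is in H. *)

Set Implicit Arguments.

Section MVArithmetic.
Context {L : MVAlgebra}.
Local Notation "x (+) y" := (mv_oplus L x y) (at level 50, left associativity).
Local Notation "~~ x" := (mv_neg L x) (at level 35, right associativity).

Lemma neg_one : ~~ (@mv_one L) = mv_zero L.
Proof. unfold mv_one; apply mv_negK. Qed.

Lemma oplus0l (x : L) : mv_zero L (+) x = x.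
Proof. rewrite mv_oplusC; apply mv_oplus0. Qed.

Lemma imp1l (a : L) : mv_imp mv_one a = a.
Proof. unfold mv_imp; rewrite neg_one; apply oplus0l. Qed.

Lemma imp1r (a : L) : mv_imp a mv_one = mv_one.
Proof. apply mv_oplus1. Qed.

(* x -> x = 1, obtained from Lukasiewicz's axiom with x := 1. *)
Lemma imp_refl (x : L) : mv_imp x x = mv_one.
Proof.
  pose proof (mv_luk L mv_one x) as Hluk.
  rewrite neg_one, oplus0l in Hluk.
  unfold mv_imp; rewrite Hluk; apply mv_oplus1.
Qed.

Lemma imp_exchange (x y z : L) : mv_imp x (mv_imp y z) = mv_imp y (mv_imp x z).
Proof. unfold mv_imp; rewrite !mv_oplusA, (mv_oplusC L (~~ x)); reflexivity. Qed.

Lemma imp_neg_neg (u v : L) : mv_imp (~~ u) (~~ v) = mv_imp v u.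
Proof. unfold mv_imp; rewrite mv_negK; apply mv_oplusC. Qed.

Lemma imp_syllogism (x y z : L) :
  mv_imp (mv_imp x y) (mv_imp (mv_imp y z) (mv_imp x z)) = mv_one.
Proof.
  unfold mv_imp.
  assert (Hshuffle : forall a b c d : L,
            a (+) (b (+) (c (+) d)) = (b (+) d) (+) (a (+) c)).
  { intros a b c d. rewrite (mv_oplusC L c d), !mv_oplusA, (mv_oplusC L a b).
    rewrite <- (mv_oplusA L b a d), (mv_oplusC L a d), !mv_oplusA; reflexivity. }
  rewrite Hshuffle, (mv_luk L y z), <- mv_oplusA.
  assert (Hone : y (+) (~~ (~~ x (+) y) (+) ~~ x) = mv_one).
  { rewrite (mv_oplusC L (~~ (~~ x (+) y))), mv_oplusA, (mv_oplusC L y), mv_oplusC.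
    apply imp_refl. }
  rewrite Hone; apply mv_oplus1.
Qed.

Lemma join_comm (x y : L) : mv_join x y = mv_join y x.
Proof. apply mv_luk. Qed.

Lemma join_of_le (x y : L) : mv_le x y -> mv_join x y = y.
Proof. intro Hxy; change (mv_imp (mv_imp x y) y = y); rewrite Hxy; apply imp1l. Qed.

Lemma le_join_l (x y : L) : mv_le x (mv_join x y).
Proof.
  change (mv_imp x (mv_imp (mv_imp x y) y) = mv_one).
  rewrite imp_exchange; apply imp_refl.
Qed.

End MVArithmetic.

Section Congruence.
Context {L : MVAlgebra}.
Variable P : L -> Prop.
Hypothesis HP : implication_filter P.

Lemma P_one : P mv_one.
Proof. apply HP. Qed.

Lemma P_mp {x y : L} : P x -> P (mv_imp x y) -> P y.
Proof. apply HP. Qed.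

Lemma P_imp_trans (x y z : L) :
  P (mv_imp x y) -> P (mv_imp y z) -> P (mv_imp x z).
Proof.
  intros Hxy Hyz; apply (P_mp Hyz), (P_mp Hxy).
  rewrite imp_syllogism; apply P_one.
Qed.

Lemma P_imp_antitone (a a' b : L) :
  P (mv_imp a' a) -> P (mv_imp (mv_imp a b) (mv_imp a' b)).
Proof. intro Ha; apply (P_mp Ha); rewrite imp_syllogism; apply P_one. Qed.

Lemma sim_refl (x : L) : simP P x x.
Proof. split; rewrite imp_refl; apply P_one. Qed.

Lemma sim_sym (x y : L) : simP P x y -> simP P y x.
Proof. intros [Hxy Hyx]; split; assumption. Qed.

Lemma sim_trans (x y z : L) : simP P x y -> simP P y z -> simP P x z.
Proof. intros [Hxy Hyx] [Hyz Hzy]; split; eapply P_imp_trans; eassumption. Qed.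

Lemma sim_neg (x y : L) : simP P x y -> simP P (mv_neg L x) (mv_neg L y).
Proof. intros [Hxy Hyx]; split; rewrite imp_neg_neg; assumption. Qed.

(* Compatibility with joins in the first argument: a \/ b = (a -> b) -> b. *)
Lemma sim_join_l (a a' b : L) : simP P a a' -> simP P (mv_join a b) (mv_join a' b).
Proof.
  intros [Haa' Ha'a]; split; do 2 apply P_imp_antitone; assumption.
Qed.

Lemma sim_join (a a' b b' : L) :
  simP P a a' -> simP P b b' -> simP P (mv_join a b) (mv_join a' b').
Proof.
  intros Ha Hb; apply sim_trans with (mv_join a' b).
  - apply sim_join_l, Ha.
  - rewrite (join_comm a'), (join_comm a'); apply sim_join_l, Hb.
Qed.

Lemma sim_meet (a a' b b' : L) :
  simP P a a' -> simP P b b' -> simP P (mv_meet a b) (mv_meet a' b').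
Proof. intros Ha Hb; apply sim_neg, sim_join; apply sim_neg; assumption. Qed.

Lemma sim_imp_of_P (z a : L) : P z -> simP P (mv_imp z a) a.
Proof.
  intro Pz; split.
  - apply (P_mp Pz); rewrite imp_exchange, imp_refl; apply P_one.
  - rewrite imp_exchange, imp_refl, imp1r; apply P_one.
Qed.

Lemma etaP_eq (x f : L) : etaP P x = etaP P f <-> simP P x f.
Proof.
  split.
  - intro Heta; assert (Hf : etaP P f f) by apply sim_refl.
    rewrite <- Heta in Hf; exact Hf.
  - intro Hxf; apply functional_extensionality; intro y.
    apply propositional_extensionality; unfold etaP; split; intro Hy.
    + apply sim_trans with x; [apply sim_sym|]; assumption.
    + apply sim_trans with f; assumption.
Qed.

End Congruence.

Section Saturation.
Context {L : MVAlgebra}.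
Variables F P : L -> Prop.
Hypothesis HF : lattice_filter F.
Hypothesis HP : implication_filter P.

Lemma J_u_iff (x : L) : J_u F P x <-> exists f, F f /\ simP P x f.
Proof.
  split; intros [f [Ff Hf]]; exists f; split; try apply (etaP_eq HP); assumption.
Qed.

Lemma J_u_saturated (x y : L) : J_u F P x -> simP P x y -> J_u F P y.
Proof.
  intros Jx Hxy; apply J_u_iff in Jx as [f [Ff Hxf]]; apply J_u_iff.
  exists f; split; [exact Ff|].
  exact (sim_trans HP (sim_sym Hxy) Hxf).
Qed.

Lemma F_sub_J_u : subset F (J_u F P).
Proof. intros x Fx; apply J_u_iff; exists x; split; [exact Fx | apply sim_refl, HP]. Qed.

Lemma J_u_upward_closed : upward_closed (J_u F P).
Proof.
  destruct HF as [_ [F_up _]].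
  intros x y Jx Hxy; apply J_u_iff in Jx as [f [Ff Hxf]]; apply J_u_iff.
  exists (mv_join f y); split.
  - apply F_up with f; [exact Ff | apply le_join_l].
  - rewrite <- (join_of_le Hxy) at 1; apply sim_join_l; assumption.
Qed.

Lemma J_u_lattice_filter : lattice_filter (J_u F P).
Proof.
  destruct HF as [[f0 Ff0] [_ F_meet]].
  split; [exists f0; apply F_sub_J_u, Ff0 | split; [exact J_u_upward_closed |]].
  intros x y Jx Jy.
  apply J_u_iff in Jx as [f [Ff Hxf]]; apply J_u_iff in Jy as [g [Fg Hyg]].
  apply J_u_iff; exists (mv_meet f g); split.
  - apply F_meet; assumption.
  - apply sim_meet; assumption.
Qed.

Lemma P_sub_kernel_J_u : subset P (kernel (J_u F P)).
Proof.
  intros z Pz a nJa Jza; apply nJa.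
  apply J_u_saturated with (mv_imp z a); [exact Jza | apply sim_imp_of_P; assumption].
Qed.

Lemma kernel_closed (H : L -> Prop) (f x : L) :
  upward_closed H -> subset P (kernel H) -> H f -> P (mv_imp f x) -> H x.
Proof.
  intros H_up HK Hf Pfx.
  destruct (classic (H x)) as [Hx | nHx]; [exact Hx | exfalso].
  apply (HK _ Pfx x nHx), H_up with f; [exact Hf | apply le_join_l].
Qed.

Lemma J_u_minimal (H : L -> Prop) :
  lattice_filter H -> subset F H -> subset P (kernel H) -> subset (J_u F P) H.
Proof.
  intros [_ [H_up _]] HFH HK x Jx; apply J_u_iff in Jx as [f [Ff [_ Pfx]]].
  apply kernel_closed with f; auto.
Qed.

End Saturation.

Theorem mainTheorem8 (L : MVAlgebra) (F P : L -> Prop) :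
  lattice_filter F -> implication_filter P ->
  (lattice_filter (J_u F P) /\ subset F (J_u F P) /\ subset P (kernel (J_u F P))) /\
  (forall H : L -> Prop,
     lattice_filter H -> subset F H -> subset P (kernel H) -> subset (J_u F P) H).
Proof.
  intros HF HP; split; [split; [| split] |].
  - apply J_u_lattice_filter; assumption.
  - apply F_sub_J_u; assumption.
  - apply P_sub_kernel_J_u; assumption.
  - apply J_u_minimal; assumption.
Qed.
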